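(* Let $L$ be a frame and $\mathcal F\subseteq\mathsf{Filt}(L)$ such that for every $F\in\mathcal F$ and $a\in L$, the filter $\{x\in L\mid x\vee a\in F\}$ belongs to $\mathcal F$. Then $\mathrm{Int}(\mathcal F)$ is a subcolocale of the coframe $(\mathsf{Filt}(L),\sqsubseteq)$; that is, $\mathrm{Int}(\mathcal F)$ is closed under all joins (intersections) of $\mathsf{Filt}(L)$, and $H\setminus G\in\mathrm{Int}(\mathcal F)$ for all $H\in\mathrm{Int}(\mathcal F)$ and $G\in\mathsf{Filt}(L)$.
   Context: A frame is a complete lattice $L$ with $(\bigvee A)\wedge b=\bigvee_{a\in A}(a\wedge b)$. A filter is a nonempty up-closed subset closed under finite meets. $\mathsf{Filt}(L)$ denotes the set of filters ordered by reverse inclusion ($F\sqsubseteq G$ iff $G\subseteq F$); it is a coframe in which joins are intersections and the co-Heyting difference is $H\setminus G=\{a\in L\mid\forall b\in G,\ b\vee a\in H\}$, characterised by $H\setminus G\sqsubseteq F$ iff $H\sqsubseteq F\sqcup G$. $\mathrm{Int}(\mathcal F)$ is the set of intersections of subfamilies of $\mathcal F$ (empty intersection $=L$). *)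

Record frame := Frame {
  carrier :> Type;
  le : carrier -> carrier -> Prop;
  le_refl : forall x, le x x;
  le_trans : forall x y z, le x y -> le y z -> le x z;
  le_antisym : forall x y, le x y -> le y x -> x = y;
  sup : (carrier -> Prop) -> carrier;
  sup_ub : forall (A : carrier -> Prop) a, A a -> le a (sup A);
  sup_least : forall (A : carrier -> Prop) b,
      (forall a, A a -> le a b) -> le (sup A) b;
  meet : carrier -> carrier -> carrier;
  meet_glb : forall x a b, le x (meet a b) <-> (le x a /\ le x b);
  frame_distr : forall (A : carrier -> Prop) b,
      meet (sup A) b = sup (fun c => exists a, A a /\ c = meet a b)
}.

Definition join (L : frame) (a b : L) : L := sup L (fun c => c = a \/ c = b).

Definition same_set {T : Type} (A B : T -> Prop) : Prop := forall x, A x <-> B x.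

Definition is_filter (L : frame) (F : L -> Prop) : Prop :=
  (exists a, F a) /\
  (forall a b, F a -> le L a b -> F b) /\
  (forall a b, F a -> F b -> F (meet L a b)).

(* Intersection of a family of subsets (empty intersection = L) *)
Definition bigcap {T : Type} (S : (T -> Prop) -> Prop) : T -> Prop :=
  fun x => forall F, S F -> F x.

Definition Int (L : frame) (FF : (L -> Prop) -> Prop) : (L -> Prop) -> Prop :=
  fun G => exists S : (L -> Prop) -> Prop,
      (forall F, S F -> FF F) /\ same_set G (bigcap S).

(* co-Heyting difference in Filt(L): H \ G = {a | forall b in G, b \/ a in H} *)
Definition filt_diff (L : frame) (H G : L -> Prop) : L -> Prop :=
  fun a => forall b, G b -> H (join L b a).

(* If H is the intersection of a subfamily S of FF, then a lies in H \ G
   exactly when b \/ a lies in every F of S for every b in G, i.e. when a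
   lies in every filter {x | x \/ b in F}.  These filters belong to FF by
   hypothesis, so H \ G is again an intersection of members of FF.  Closure
   under intersections is pure set theory: an intersection of members of
   Int(FF) is the intersection of all members of FF containing it. *)


Section IntFilters.

Variable L : frame.

Definition join_preimage (F : L -> Prop) (b : L) : L -> Prop :=
  fun x => F (join L x b).

Lemma join_comm (a b : L) : join L a b = join L b a.
Proof.
  unfold join; apply le_antisym; apply sup_least; intros c [-> | ->];
    apply sup_ub; tauto.
Qed.

Lemma is_filter_same_set (F G : L -> Prop) :
  same_set F G -> is_filter L G -> is_filter L F.
Proof.
  intros eqFG [[a Ga] [up_G meet_G]]; split; [|split].
  - exists a; apply eqFG; exact Ga.
  - intros x y Fx lexy; apply eqFG; apply (up_G x); [apply eqFG|]; assumption.
  - intros x y Fx Fy; apply eqFG; apply meet_G; apply eqFG; assumption.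
Qed.

Lemma bigcap_is_filter (S : (L -> Prop) -> Prop) :
  (forall F, S F -> is_filter L F) -> is_filter L (bigcap S).
Proof.
  intros filt_S; split; [|split].
  - exists (sup L (fun _ => True)); intros F SF.
    destruct (filt_S F SF) as [[a Fa] [up_F _]].
    apply (up_F a); [exact Fa | apply sup_ub; exact I].
  - intros a b Ha lab F SF.
    apply (proj1 (proj2 (filt_S F SF)) a); [apply Ha | exact lab]; exact SF.
  - intros a b Ha Hb F SF.
    apply (proj2 (proj2 (filt_S F SF))); [apply Ha | apply Hb]; exact SF.
Qed.

Lemma Int_is_filter (FF : (L -> Prop) -> Prop) (H : L -> Prop) :
  (forall F, FF F -> is_filter L F) -> Int L FF H -> is_filter L H.
Proof.
  intros filt_FF [S [S_FF eqH]].
  apply (is_filter_same_set _ _ eqH), bigcap_is_filter; auto.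
Qed.

Lemma Int_bigcap (FF : (L -> Prop) -> Prop) (GG : (L -> Prop) -> Prop) :
  (forall G, GG G -> Int L FF G) -> Int L FF (bigcap GG).
Proof.
  intros Int_GG.
  exists (fun F => FF F /\ forall x, bigcap GG x -> F x); split.
  - intros F [FF_F _]; exact FF_F.
  - intros x; split.
    + intros Hx F [_ HF]; auto.
    + intros Hx G GG_G.
      destruct (Int_GG G GG_G) as [S [S_FF eqG]].
      apply eqG; intros F SF; apply Hx; split; [auto|].
      intros y Hy; apply eqG; [exact (Hy G GG_G) | exact SF].
Qed.

Lemma filt_diff_bigcap (S : (L -> Prop) -> Prop) (G : L -> Prop) :
  same_set (filt_diff L (bigcap S) G)
           (fun x => forall F b, S F -> G b -> join_preimage F b x).
Proof.
  intros x; unfold join_preimage; split.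
  - intros Hx F b SF Gb; rewrite join_comm; exact (Hx b Gb F SF).
  - intros Hx b Gb F SF; rewrite join_comm; exact (Hx F b SF Gb).
Qed.

Lemma Int_filt_diff (FF : (L -> Prop) -> Prop) (H G : L -> Prop) :
  (forall F a, FF F -> exists F', FF F' /\ same_set F' (join_preimage F a)) ->
  Int L FF H -> Int L FF (filt_diff L H G).
Proof.
  intros closed_FF [S [S_FF eqH]].
  exists (fun F' => FF F' /\ exists F b, S F /\ G b /\
                                  same_set F' (join_preimage F b)).
  split; [intros F' [FF_F' _]; exact FF_F'|].
  intros x; split.
  - intros Hx F' [_ [F [b [SF [Gb eqF']]]]]; apply eqF'.
    refine (proj1 (filt_diff_bigcap S G x) _ F b SF Gb).
    intros c Gc; apply eqH; exact (Hx c Gc).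
  - intros Hx b Gb; apply eqH; revert b Gb.
    apply (proj2 (filt_diff_bigcap S G x)); intros F c SF Gc.
    destruct (closed_FF F c (S_FF F SF)) as [F' [FF_F' eqF']].
    apply eqF', Hx; split; [exact FF_F'|].
    exists F, c; auto.
Qed.

End IntFilters.

Theorem mainTheorem8 (L : frame) (FF : (L -> Prop) -> Prop)
  (hFilt : forall F, FF F -> is_filter L F)
  (hclosed : forall F (a : L), FF F ->
      exists F', FF F' /\ same_set F' (fun x => F (join L x a))) :
  (forall H, Int L FF H -> is_filter L H) /\
  (forall GG : (L -> Prop) -> Prop,
      (forall G, GG G -> Int L FF G) -> Int L FF (bigcap GG)) /\
  (forall H G, Int L FF H -> is_filter L G -> Int L FF (filt_diff L H G)).
Proof.
  split; [|split].
  - intros H; apply Int_is_filter; exact hFilt.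
  - apply Int_bigcap.
  - intros H G Int_H _; exact (Int_filt_diff L FF H G hclosed Int_H).
Qed.
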